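(* Let $U=\sum_{j=0}^3 c_j\sigma_j\otimes\sigma_j$ be a normalized two-qubit unitary (see context). For $\alpha,\beta\in[0,\pi/2]$, $\theta\in[0,2\pi)$, $\mu\in(0,\pi/2]$ let $$|\psi(\alpha;\theta,\mu)\rangle=\cos\alpha|0,0\rangle+\sin\alpha|1\rangle(e^{i\theta}\cos\mu|0\rangle+\sin\mu|1\rangle)\in\mathcal H_A\otimes\mathcal H_{R_A},$$ $$|\phi(\beta)\rangle=\cos\beta|0,0\rangle+\sin\beta|1,1\rangle\in\mathcal H_B\otimes\mathcal H_{R_B},$$ with $R_A,R_B$ qubits. Suppose that the maximum defining $K_E(U)$ is attained at an input state of the form $|\psi(\alpha;\theta,\mu)\rangle_{AR_A}\otimes|\phi(\beta)\rangle_{BR_B}$ for some parameters. Then the maximum is also attained at an input of the form $(\cos\alpha|00\rangle+\sin\alpha|11\rangle)_{AR_A}\otimes(\cos\beta|00\rangle+\sin\beta|11\rangle)_{BR_B}$, i.e. $K_E(U)=\max_{\alpha,\beta\in[0,\pi/2]}E(\varphi(\alpha,\beta;\tfrac{\pi}{2},\tfrac{\pi}{2}))$.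
   Context: Pauli matrices: $\sigma_0=I$, $\sigma_1=\begin{pmatrix}0&1\\1&0\end{pmatrix}$, $\sigma_2=\begin{pmatrix}0&-i\\i&0\end{pmatrix}$, $\sigma_3=\begin{pmatrix}1&0\\0&-1\end{pmatrix}$. For real $x,y,z$ set $c_0=\cos x\cos y\cos z+i\sin x\sin y\sin z$, $c_1=\cos x\sin y\sin z+i\sin x\cos y\cos z$, $c_2=\sin x\cos y\sin z+i\cos x\sin y\cos z$, $c_3=\sin x\sin y\cos z+i\cos x\cos y\sin z$, and $U=\sum_{j=0}^3c_j\sigma_j\otimes\sigma_j$ acting on qubits $A,B$. $U$ is called normalized if $\pi/4\ge x\ge y\ge z\ge0$ and $0<y<\pi/4$. For a bipartite unitary $U$ on $\mathcal H_A\otimes\mathcal H_B$, the entangling power is $K_E(U)=\max E\big(U(|\phi\rangle_{AR_A}\otimes|\psi\rangle_{BR_B})\big)$, the maximum over pure states on $AR_A$ and $BR_B$ with arbitrary finite-dimensional ancillas $R_A,R_B$ ($U$ acting on $A,B$), where for a pure state $|\chi\rangle$ on $AR_A\otimes BR_B$, $E(|\chi\rangle)=S(\mathrm{Tr}_{AR_A}|\chi\rangle\langle\chi|)$ is the von Neumann entropy with base-2 logarithm (in ebits). $E(\varphi(\alpha,\beta;\frac{\pi}{2},\frac{\pi}{2}))$ denotes $E$ of $U\big((\cos\alpha|00\rangle+\sin\alpha|11\rangle)_{AR_A}\otimes(\cos\beta|00\rangle+\sin\beta|11\rangle)_{BR_B}\big)$ with $R_A,R_B$ qubits. *)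

From HB Require Import structures.
From mathcomp Require Import all_boot all_order all_algebra.
From mathcomp Require Import complex.
From mathcomp Require Import all_classical all_reals all_analysis.

Set Implicit Arguments.
Unset Strict Implicit.
Unset Printing Implicit Defensive.

Import Order.TTheory GRing.Theory Num.Theory.
Local Open Scope ring_scope.

Section Defs.
Variable R : realType.
Local Notation C := (R[i]).

Definition cR (r : R) : C := Complex r 0.

Definition pauli (j : 'I_4) : 'M[C]_2 :=
  match val j with
  | 0 => \matrix_(i, k) (if i == k then 1 else 0)
  | 1 => \matrix_(i, k) (if i == k then 0 else 1)
  | 2 => \matrix_(i, k)
           (if i == k then 0 else if val i == 0%N then - Complex 0 1 else Complex 0 1)
  | _ => \matrix_(i, k) (if i == k then (if val i == 0%N then 1 else -1) else 0)
  end.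

Definition coefc (x y z : R) (j : 'I_4) : C :=
  match val j with
  | 0 => Complex (cos x * cos y * cos z) (sin x * sin y * sin z)
  | 1 => Complex (cos x * sin y * sin z) (sin x * cos y * cos z)
  | 2 => Complex (sin x * cos y * sin z) (cos x * sin y * cos z)
  | _ => Complex (sin x * sin y * cos z) (cos x * cos y * sin z)
  end.

(* matrix element <a' b'| U |a b> of U = sum_j c_j sigma_j (x) sigma_j,
   first tensor factor acting on qubit A, second on qubit B *)
Definition Uel (x y z : R) (a' b' a b : 'I_2) : C :=
  \sum_(j < 4) coefc x y z j * pauli j a' a * pauli j b' b.

Definition normalized (x y z : R) : Prop :=
  pi / 4 >= x /\ x >= y /\ y >= z /\ z >= 0 /\ 0 < y /\ y < pi / 4.

(* A pure state on A (x) R_A (qubit A, ancilla of dimension m.+1) is given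
   by its coefficient matrix psi : 'M_(2, m.+1),
   |psi> = sum_{a,r} psi a r |a>|r>. *)
Definition unit_state (p q : nat) (psi : 'M[C]_(p, q)) : Prop :=
  \sum_(a < p) \sum_(r < q) `|psi a r| ^+ 2 = 1.

(* output U_{AB} (|psi>_{A R_A} (x) |phi>_{B R_B}), coefficient on
   |a r>_{A R_A} |b s>_{B R_B} *)
Definition out_state (x y z : R) (m n : nat)
    (psi : 'M[C]_(2, m)) (phi : 'M[C]_(2, n))
    (a : 'I_2) (r : 'I_m) (b : 'I_2) (s : 'I_n) : C :=
  \sum_(a0 < 2) \sum_(b0 < 2) Uel x y z a b a0 b0 * psi a0 r * phi b0 s.

(* reduced density matrix Tr_{A R_A} |chi><chi| on B (x) R_B; the basis
   vector |b s> of B (x) R_B has index b * n.+1 + s in 'I_(2 * n.+1). *)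
Definition idxB (n : nat) (k : 'I_(2 * n.+1)) : 'I_2 := inord (k %/ n.+1).
Definition idxRB (n : nat) (k : 'I_(2 * n.+1)) : 'I_n.+1 := inord (k %% n.+1).

Definition reduced_B (x y z : R) (m n : nat)
    (psi : 'M[C]_(2, m.+1)) (phi : 'M[C]_(2, n.+1)) : 'M[C]_(2 * n.+1) :=
  \matrix_(k, l)
    \sum_(a < 2) \sum_(r < m.+1)
      out_state x y z psi phi a r (idxB k) (idxRB k) *
      (out_state x y z psi phi a r (idxB l) (idxRB l))^*.

Definition spectrum (k : nat) (M : 'M[C]_k) : seq C :=
  sval (closed_field_poly_normal (char_poly M)).

Definition xlog2x (t : R) : R := if t == 0 then 0 else t * (ln t / ln 2).

Definition vN_entropy (k : nat) (rho : 'M[C]_k) : R :=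
  - \sum_(l <- spectrum rho) xlog2x (complex.Re l).

Definition Eout (x y z : R) (m n : nat)
    (psi : 'M[C]_(2, m.+1)) (phi : 'M[C]_(2, n.+1)) : R :=
  vN_entropy (reduced_B x y z psi phi).

Definition KE_attained_at (x y z : R) (m n : nat)
    (psi : 'M[C]_(2, m.+1)) (phi : 'M[C]_(2, n.+1)) : Prop :=
  forall (m' n' : nat) (psi' : 'M[C]_(2, m'.+1)) (phi' : 'M[C]_(2, n'.+1)),
    unit_state psi' -> unit_state phi' ->
    Eout x y z psi' phi' <= Eout x y z psi phi.

Definition psi_state (alpha theta mu : R) : 'M[C]_(2, 2) :=
  \matrix_(a, r)
    if val a == 0%N then (if val r == 0%N then cR (cos alpha) else 0)
    else (if val r == 0%N
          then Complex (cos theta) (sin theta) * cR (sin alpha * cos mu)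
          else cR (sin alpha * sin mu)).

Definition phi_state (beta : R) : 'M[C]_(2, 2) :=
  \matrix_(b, s)
    if b == s then (if val b == 0%N then cR (cos beta) else cR (sin beta))
    else 0.

End Defs.

From HB Require Import structures.
From mathcomp Require Import all_boot all_order all_algebra.
From mathcomp Require Import complex.
From mathcomp Require Import all_classical all_reals all_analysis.
From mathcomp Require Import spectral sesquilinear.
From mathcomp Require Import ring lra.

Set Implicit Arguments.
Unset Strict Implicit.
Unset Printing Implicit Defensive.

Import Order.TTheory GRing.Theory Num.Theory.
Local Open Scope ring_scope.
Local Open Scope sesquilinear_scope.

(* U preserves the parity of the pair of qubits A B.  Hence, when the input on
   B R_B is Schmidt-diagonal, cos b|00> + sin b|11>, the reduced output on B R_B
   depends on the input on A R_A only through its reduced state rho_A on A, and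
   every entry of it pairs two parity sectors of the basis |b s> of B R_B.
   Replacing |psi(alpha; theta, mu)> by cos a|00> + sin a|11> keeps the diagonal
   of rho_A and kills its off-diagonal entries, so it replaces the output by its
   pinching along the parity of b + s.  The pinching is the average of two
   unitary conjugates of the output, so by concavity of the entropy it cannot
   lower E: the Schmidt-diagonal input is optimal as well. *)

Section XLog2X.
Variable R : realType.
Implicit Types s t : R.

Lemma xlog2xE t : xlog2x t = t * ln t / ln 2.
Proof. by rewrite /xlog2x; case: eqP => [->|_]; rewrite ?mul0r ?mulrA. Qed.

Lemma xlog2x0 : xlog2x 0 = 0 :> R.
Proof. by rewrite xlog2xE mul0r mul0r. Qed.

Lemma xlnx_tangent s t : 0 < s -> 0 <= t ->
  s * ln s + (ln s + 1) * (t - s) <= t * ln t.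
Proof.
move=> s0; rewrite le_eqVlt => /predU1P[<-|t0]; first by rewrite mul0r; lra.
have : ln (1 + (s / t - 1)) <= s / t - 1.
  by apply: le_ln1Dx; have := divr_gt0 s0 t0; lra.
rewrite addrC subrK ln_div ?posrE // => /(ler_wpM2l (ltW t0)).
rewrite mulrBr mulrBr (mulrC t (s / t)) divfK ?gt_eqF // mulr1; lra.
Qed.

Lemma xlog2x_tangent s t : 0 < s -> 0 <= t ->
  xlog2x s + (ln s + 1) / ln 2 * (t - s) <= xlog2x t.
Proof.
move=> s0 t0; have ln2_gt0 : 0 < ln (2 : R) by rewrite ln_gt0 // ltr1n.
rewrite !xlog2xE -[_ / ln 2 * _]mulrAC -mulrDl ler_pM2r ?invr_gt0 //.
exact: xlnx_tangent.
Qed.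

Lemma xlog2x_jensen (I : finType) (w t : I -> R) :
  (forall i, 0 <= w i) -> (forall i, 0 <= t i) -> \sum_i w i = 1 ->
  xlog2x (\sum_i w i * t i) <= \sum_i w i * xlog2x (t i).
Proof.
move=> w0 t0 w1; have wt0 i : 0 <= w i * t i by rewrite mulr_ge0.
have [s_eq0|s_neq0] := eqVneq (\sum_i w i * t i) 0.
  rewrite s_eq0 xlog2x0 big1 // => i _.
  have /eqP := psumr_eq0P (fun i _ => wt0 i) s_eq0 (i := i) isT.
  by rewrite mulf_eq0 => /orP[] /eqP ->; rewrite ?mul0r ?xlog2x0 ?mulr0.
set s := \sum_i w i * t i in s_neq0 *.
have s_gt0 : 0 < s by rewrite lt_def s_neq0 sumr_ge0.
set c := (ln s + 1) / ln 2.
apply: (@le_trans _ _ (\sum_i w i * (xlog2x s + c * (t i - s)))).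
  rewrite (eq_bigr (fun i => xlog2x s * w i + c * (w i * t i) - c * s * w i));
    last by move=> i _; ring.
  by rewrite sumrB big_split /= -!mulr_sumr w1 -/s; lra.
by apply: ler_sum => i _; rewrite ler_wpM2l ?xlog2x_tangent.
Qed.

Lemma xlog2x_midpoint s t : 0 <= s -> 0 <= t ->
  xlog2x ((s + t) / 2) <= (xlog2x s + xlog2x t) / 2.
Proof.
move=> s0 t0; rewrite !mulrDl ![_ / 2]mulrC.
have := @xlog2x_jensen bool (fun=> 2^-1) (fun i => if i then s else t).
rewrite !big_bool /=; apply; [by move=> ?; lra | by case | lra].
Qed.

End XLog2X.

Lemma char_poly_conj (F : fieldType) n (V A : 'M[F]_n) :
  V \in unitmx -> char_poly (invmx V *m A *m V) = char_poly A.
Proof.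
move=> Vu; rewrite /char_poly /char_poly_mx.
have -> : 'X%:M - map_mx polyC (invmx V *m A *m V) =
    map_mx polyC (invmx V) *m ('X%:M - map_mx polyC A) *m map_mx polyC V.
  have XV : map_mx polyC (invmx V) *m 'X%:M *m map_mx polyC V = 'X%:M.
    by rewrite scalar_mxC -mulmxA -map_mxM mulVmx // map_mx1 mulmx1.
  by rewrite mulmxBr mulmxBl XV -!map_mxM.
rewrite !det_mulmx !det_map_mx mulrAC -rmorphM /= -det_mulmx mulVmx //.
by rewrite det1 mul1r.
Qed.

Section HermitianMatrices.
Variable C : numClosedFieldType.

Lemma trmxC_mul m n p (A : 'M[C]_(m, n)) (B : 'M[C]_(n, p)) :
  (A *m B) ^t* = B ^t* *m A ^t*.
Proof. by rewrite trmx_mul map_mxM. Qed.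

Lemma tmul_hermitian m n (Y : 'M[C]_(m, n)) : (Y ^t* *m Y) ^t* = Y ^t* *m Y.
Proof. by rewrite trmxC_mul trmxCK. Qed.

Lemma sum_hermitian (I : finType) n (A : I -> 'M[C]_n) :
  (forall i, (A i) ^t* = A i) -> (\sum_i A i) ^t* = \sum_i A i.
Proof. by move=> hA; rewrite !raddf_sum; apply: eq_bigr => i _; apply: hA. Qed.

Lemma selfadjoint_normalmx n (M : 'M[C]_n) : M ^t* = M -> M \is normalmx.
Proof. by move=> MH; apply/normalmxP; rewrite MH. Qed.

Definition psdmx n (M : 'M[C]_n) := forall v : 'rV_n, 0 <= (v *m M *m v ^t*) 0 0.

Lemma psdmx_tmul m n (Y : 'M[C]_(m, n)) : psdmx (Y ^t* *m Y).
Proof.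
move=> v; rewrite mulmxA -[_ *m Y *m _]mulmxA -[Y *m _]trmxCK trmxC_mul trmxCK.
by rewrite mxE; apply: sumr_ge0 => j _; rewrite !mxE mul_conjC_ge0.
Qed.

Lemma psdmx_sum (I : finType) n (A : I -> 'M[C]_n) :
  (forall i, psdmx (A i)) -> psdmx (\sum_i A i).
Proof.
move=> hA v; rewrite mulmx_sumr mulmx_suml summxE.
by apply: sumr_ge0 => i _; apply: hA.
Qed.

Lemma psdmx_conj_diag n (M U : 'M[C]_n) i :
  psdmx M -> 0 <= (U *m M *m U ^t*) i i.
Proof.
move=> /(_ (row i U)); congr (0 <= _).
rewrite !mxE; apply: eq_bigr => l _; rewrite !mxE; congr (_ * _).
by apply: eq_bigr => k _; rewrite !mxE.
Qed.

Lemma unitarymx_row_norm n m (X : 'M[C]_(n, m)) i :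
  X \is unitarymx -> \sum_j X i j * (X i j)^* = 1.
Proof.
move=> /unitarymxP /matrixP /(_ i i); rewrite !mxE eqxx mulr1n => <-.
by apply: eq_bigr => j _; rewrite !mxE.
Qed.

Lemma unitarymx_col_norm n (X : 'M[C]_n) j :
  X \is unitarymx -> \sum_i X i j * (X i j)^* = 1.
Proof.
rewrite -trmxC_unitary => /(unitarymx_row_norm j) <-.
by apply: eq_bigr => i _; rewrite !mxE conjCK mulrC.
Qed.

Lemma spectral_diagE n (M : 'M[C]_n) (V := spectralmx M) :
  M \is normalmx ->
  M = V ^t* *m diag_mx (spectral_diag M) *m V /\
  V *m M *m V ^t* = diag_mx (spectral_diag M).
Proof.
move=> /orthomx_spectralP; rewrite invmx_unitary ?spectral_unitarymx // => ME.
split=> //; rewrite {1}ME !mulmxA (unitarymxP _) ?spectral_unitarymx // mul1mx.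
by rewrite mulmxtVK ?spectral_unitarymx.
Qed.

Lemma conj_diag_spectral n (M U : 'M[C]_n) i (X := U *m (spectralmx M) ^t*) :
  M \is normalmx ->
  (U *m M *m U ^t*) i i = \sum_j X i j * spectral_diag M 0 j * (X i j)^*.
Proof.
case/spectral_diagE => ME _.
have -> : U *m M *m U ^t* = X *m diag_mx (spectral_diag M) *m X ^t*.
  by rewrite /X trmxC_mul trmxCK {1}ME !mulmxA.
by rewrite mul_mx_diag !mxE; apply: eq_bigr => j _; rewrite !mxE.
Qed.

Definition signmx n (blk : 'I_n -> bool) : 'M[C]_n :=
  diag_mx (\row_k (if blk k then -1 else 1)).

Lemma signmx_hermitian n (blk : 'I_n -> bool) : (signmx blk) ^t* = signmx blk.
Proof.
apply/matrixP => i j; rewrite !mxE eq_sym.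
case: eqP => [->|_]; rewrite ?mulr0n ?mulr1n ?conjC0 //.
by case: (blk j); rewrite ?conjCN1 ?conjC1.
Qed.

Lemma signmx_unitary n (blk : 'I_n -> bool) : signmx blk \is unitarymx.
Proof.
apply/unitarymxP; rewrite signmx_hermitian /signmx mul_diag_mx.
apply/matrixP => i j; rewrite !mxE.
case: eqP => [->|_]; rewrite ?mulr0n ?mulr1n ?mulr0 //.
by case: (blk j); rewrite ?mulrNN mulr1.
Qed.

Definition pinchmx n (blk : 'I_n -> bool) (P : 'M[C]_n) : 'M[C]_n :=
  \matrix_(k, l) if blk k == blk l then P k l else 0.

Lemma pinchmx_hermitian n (blk : 'I_n -> bool) (P : 'M[C]_n) :
  P ^t* = P -> (pinchmx blk P) ^t* = pinchmx blk P.
Proof.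
move/matrixP=> hP; apply/matrixP => k l; rewrite !mxE eq_sym.
by case: eqP => _; rewrite ?conjC0 // -[RHS]hP !mxE.
Qed.

Lemma pinchmx_sign_average n (blk : 'I_n -> bool) (P : 'M[C]_n)
    (W := signmx blk) :
  pinchmx blk P + pinchmx blk P = P + W *m P *m W ^t*.
Proof.
rewrite /W signmx_hermitian /signmx mul_diag_mx mul_mx_diag.
apply/matrixP => k l; rewrite !mxE.
by case: (blk k); case: (blk l);
  rewrite /= ?mulN1r ?mulrN1 ?opprK ?mul1r ?mulr1 ?subrr ?addr0.
Qed.

End HermitianMatrices.

Arguments signmx {C n} blk.

Section VonNeumannEntropy.
Variable R : realType.
Local Notation C := R[i].
Local Notation Re := (@complex.Re R).

Lemma perm_eq_spectrum n (M : 'M[C]_n) : M \is normalmx ->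
  perm_eq (spectrum M) [seq spectral_diag M 0 j | j <- index_enum 'I_n].
Proof.
move=> /orthomx_spectralP ME.
have cpE : char_poly M = \prod_(j < n) ('X - (spectral_diag M 0 j)%:P).
  rewrite {1}ME char_poly_conj ?spectral_unit //.
  rewrite char_poly_trig ?diag_mx_is_trig //.
  by apply: eq_bigr => j _; rewrite mxE eqxx mulr1n.
rewrite /spectrum; case: closed_field_poly_normal => r /= rE.
apply: prod_XsubC_eq; rewrite big_map -cpE.
by move: rE; rewrite (monicP (char_poly_monic M)) scale1r => <-.
Qed.

Lemma vN_entropy_normalmx n (M : 'M[C]_n) : M \is normalmx ->
  vN_entropy M = - \sum_j xlog2x (Re (spectral_diag M 0 j)).
Proof.
by move=> Mn; rewrite /vN_entropy (perm_big _ (perm_eq_spectrum Mn)) big_map.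
Qed.

Lemma Re_ge0 (c : C) : 0 <= c -> 0 <= Re c.
Proof. by case: c => a b; rewrite lecE /= => /andP[]. Qed.

Lemma ReD (c d : C) : Re (c + d) = Re c + Re d.
Proof. by case: c; case: d. Qed.

Lemma Re_sum (I : Type) (r : seq I) (P : pred I) (F : I -> C) :
  Re (\sum_(j <- r | P j) F j) = \sum_(j <- r | P j) Re (F j).
Proof. exact: (big_morph Re ReD). Qed.

Lemma Re_mulJ (c d : C) : Re (c * d * c^*) = Re (c * c^*) * Re d.
Proof. by case: c => a b; case: d => u v /=; ring. Qed.

(* The weights |X i j|^2 of the unitary X form a doubly stochastic matrix, so
   Jensen's inequality applies row by row. *)
Lemma sum_xlog2x_conj_diag_le n (M U : 'M[C]_n) :
  M \is normalmx -> psdmx M -> U \is unitarymx ->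
  \sum_i xlog2x (Re ((U *m M *m U ^t*) i i)) <=
  \sum_j xlog2x (Re (spectral_diag M 0 j)).
Proof.
move=> Mn Mpsd Uu; pose X := U *m (spectralmx M) ^t*.
have Xu : X \is unitarymx.
  by apply: mul_unitarymx; rewrite ?trmxC_unitary ?spectral_unitarymx.
pose w i j := Re (X i j * (X i j)^*); pose t j := Re (spectral_diag M 0 j).
have w0 i j : 0 <= w i j by apply/Re_ge0/mul_conjC_ge0.
have t0 j : 0 <= t j.
  have := psdmx_conj_diag (spectralmx M) j Mpsd.
  by rewrite (proj2 (spectral_diagE Mn)) mxE eqxx mulr1n => /Re_ge0.
have diagE i : Re ((U *m M *m U ^t*) i i) = \sum_j w i j * t j.
  rewrite (conj_diag_spectral U i Mn) Re_sum.
  by apply: eq_bigr => j _; rewrite Re_mulJ.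
apply: (@le_trans _ _ (\sum_i \sum_j w i j * xlog2x (t j))).
  apply: ler_sum => i _; rewrite diagE; apply: xlog2x_jensen => //.
  by rewrite -Re_sum unitarymx_row_norm.
rewrite exchange_big; apply: ler_sum => j _.
by rewrite -mulr_suml -Re_sum unitarymx_col_norm // mul1r.
Qed.

(* The pinching is the average of P and its conjugate by the sign matrix;
   concavity of the entropy does the rest. *)
Lemma vN_entropy_pinchmx n (blk : 'I_n -> bool) (P : 'M[C]_n) :
  P ^t* = P -> psdmx P -> vN_entropy P <= vN_entropy (pinchmx blk P).
Proof.
move=> PH Ppsd; set Q := pinchmx blk P.
have Qn : Q \is normalmx by apply/selfadjoint_normalmx/pinchmx_hermitian.
have Pn := selfadjoint_normalmx PH.
rewrite (vN_entropy_normalmx Qn) (vN_entropy_normalmx Pn) lerN2.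
set V := spectralmx Q; set W : 'M[C]_n := signmx blk.
have VWu : V *m W \is unitarymx.
  by rewrite mul_unitarymx ?spectral_unitarymx ?signmx_unitary.
have eigQ j : Re (spectral_diag Q 0 j) =
    (Re ((V *m P *m V ^t*) j j) + Re ((V *m W *m P *m (V *m W) ^t*) j j)) / 2.
  have := congr1 (fun A => V *m A *m V ^t*) (pinchmx_sign_average blk P).
  rewrite /= -/W !mulmxDr !mulmxDl (proj2 (spectral_diagE Qn)) trmxC_mul !mulmxA.
  move=> /matrixP /(_ j j).
  rewrite [LHS]mxE [RHS]mxE [diag_mx _ _ _]mxE eqxx mulr1n.
  by move/(congr1 Re); rewrite !ReD; lra.
apply: (@le_trans _ _ (\sum_j (xlog2x (Re ((V *m P *m V ^t*) j j)) +
    xlog2x (Re ((V *m W *m P *m (V *m W) ^t*) j j))) / 2)).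
  by apply: ler_sum => j _; rewrite eigQ xlog2x_midpoint ?Re_ge0 ?psdmx_conj_diag.
have := sum_xlog2x_conj_diag_le Pn Ppsd (spectral_unitarymx Q).
have := sum_xlog2x_conj_diag_le Pn Ppsd VWu.
rewrite -/V -mulr_suml big_split /= => J1 J2.
by rewrite ler_pdivrMr ?ltr0n // mulr_natr mulr2n; apply: lerD J2 J1.
Qed.

End VonNeumannEntropy.

Section ParitySelection.
Variable R : realType.
Local Notation C := R[i].
Variables x y z : R.

Lemma Uel_odd_eq0 (a' b' a b : 'I_2) :
  odd (a' + b' + a + b) -> Uel x y z a' b' a b = 0.
Proof.
move=> h; apply: big1 => -[[|[|[|[|j]]]] ?] _ //;
case: a' h => [[|[|?]] ?] //; case: b' => [[|[|?]] ?] //;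
case: a => [[|[|?]] ?] //; case: b => [[|[|?]] ?] //= _;
by rewrite /pauli /= !mxE /= ?mulr0 ?mul0r.
Qed.

Definition parity_partner (a b s : 'I_2) : 'I_2 :=
  if odd (a + b + s) then ord_max else ord0.

Lemma odd_parity_partner (a b s a0 : 'I_2) :
  a0 != parity_partner a b s -> odd (a + b + a0 + s).
Proof.
by case: a => [[|[|?]] ?] //; case: b => [[|[|?]] ?] //;
   case: s => [[|[|?]] ?] //; case: a0 => [[|[|?]] ?].
Qed.

Lemma parity_partner_eq (a b s b' s' : 'I_2) :
  odd (b + s) = odd (b' + s') -> parity_partner a b s = parity_partner a b' s'.
Proof. by rewrite /parity_partner -!addnA !oddD => ->. Qed.

Lemma parity_partner_neq (a b s b' s' : 'I_2) :
  odd (b + s) != odd (b' + s') -> parity_partner a b s != parity_partner a b' s'.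
Proof.
rewrite /parity_partner -!addnA !oddD.
by case: (odd a); case: (odd b); case: (odd s); case: (odd b'); case: (odd s').
Qed.

Lemma phi_state_offdiag (beta : R) (b s : 'I_2) :
  b != s -> phi_state beta b s = 0.
Proof. by rewrite mxE => /negbTE ->. Qed.

Lemma out_state_phi_state (beta : R) m (psi : 'M[C]_(2, m)) a r (b s : 'I_2) :
  out_state x y z psi (phi_state beta) a r b s =
  Uel x y z a b (parity_partner a b s) s * psi (parity_partner a b s) r *
  phi_state beta s s.
Proof.
rewrite /out_state (bigD1 (parity_partner a b s)) //= [X in _ + X]big1 ?addr0.
  rewrite (bigD1 s) //= [X in _ + X]big1 ?addr0 // => b0 b0s.
  by rewrite phi_state_offdiag // mulr0.
move=> a0 a0p; apply: big1 => b0 _.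
have [->|b0s] := eqVneq b0 s; last by rewrite phi_state_offdiag // mulr0.
by rewrite Uel_odd_eq0 ?mul0r // odd_parity_partner.
Qed.

Lemma reduced_B_phi_state (beta : R) m (psi : 'M[C]_(2, m.+1)) k l
    (p := fun a (k : 'I_(2 * 2)) => parity_partner a (idxB k) (idxRB k))
    (u := fun a (k : 'I_(2 * 2)) =>
       Uel x y z a (idxB k) (p a k) (idxRB k) *
       phi_state beta (idxRB k) (idxRB k)) :
  reduced_B x y z psi (phi_state beta) k l =
  \sum_(a < 2) u a k * (u a l)^* * (psi *m psi ^t*) (p a k) (p a l).
Proof.
rewrite mxE; apply: eq_bigr => a _; rewrite !mxE mulr_sumr.
apply: eq_bigr => r _; rewrite /u /p !out_state_phi_state !mxE !rmorphM /=; ring.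
Qed.

End ParitySelection.

Section InputStates.
Variable R : realType.

Lemma phi_state_gram_offdiag (alpha : R) (p q : 'I_2) :
  p != q -> (phi_state alpha *m (phi_state alpha) ^t*) p q = 0.
Proof.
move=> pq; rewrite mxE; apply: big1 => r _.
have [<-|pr] := eqVneq p r; last by rewrite phi_state_offdiag ?mul0r.
by rewrite !mxE [q == p]eq_sym (negbTE pq) conjC0 mulr0.
Qed.

Lemma psi_state_gram_diag (alpha theta mu : R) (p : 'I_2) :
  (psi_state alpha theta mu *m (psi_state alpha theta mu) ^t*) p p =
  (phi_state alpha *m (phi_state alpha) ^t*) p p.
Proof.
rewrite !mxE !big_ord_recl !big_ord0 !addr0 !mxE /=.
case: p => [[|[|?]] ?] //=.
have h1 := cos2Dsin2 theta; have h2 := cos2Dsin2 mu.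
apply/eqP; rewrite eq_complex /=; apply/andP; split; apply/eqP; last by ring.
apply: subr0_eq; set sa := sin alpha; set cm := cos mu.
transitivity (sa ^+ 2 * cm ^+ 2 * (cos theta ^+ 2 + sin theta ^+ 2 - 1) +
              sa ^+ 2 * (cm ^+ 2 + sin mu ^+ 2 - 1)); first by ring.
by rewrite h1 h2 !subrr !mulr0 addr0.
Qed.
End InputStates.

Section ReducedState.
Variable R : realType.
Local Notation C := R[i].
Variables x y z : R.

Lemma reduced_B_gram m n (psi : 'M[C]_(2, m.+1)) (phi : 'M[C]_(2, n.+1))
    (Y := fun a r =>
       \row_(k < 2 * n.+1) (out_state x y z psi phi a r (idxB k) (idxRB k))^*) :
  reduced_B x y z psi phi = \sum_a \sum_r (Y a r) ^t* *m Y a r.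
Proof.
apply/matrixP => k l; rewrite !mxE summxE; apply: eq_bigr => a _.
rewrite summxE; apply: eq_bigr => r _.
by rewrite !mxE big_ord1 !mxE conjCK.
Qed.

Lemma reduced_B_hermitian m n (psi : 'M[C]_(2, m.+1)) (phi : 'M[C]_(2, n.+1)) :
  (reduced_B x y z psi phi) ^t* = reduced_B x y z psi phi.
Proof.
rewrite reduced_B_gram; apply: sum_hermitian => a; apply: sum_hermitian => r.
exact: tmul_hermitian.
Qed.

Lemma reduced_B_psd m n (psi : 'M[C]_(2, m.+1)) (phi : 'M[C]_(2, n.+1)) :
  psdmx (reduced_B x y z psi phi).
Proof.
rewrite reduced_B_gram; apply: psdmx_sum => a; apply: psdmx_sum => r.
exact: psdmx_tmul.
Qed.

Lemma reduced_B_phi_state_pinch (alpha theta mu beta : R) :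
  reduced_B x y z (phi_state alpha) (phi_state beta) =
  pinchmx (fun k => odd (idxB k + idxRB k))
    (reduced_B x y z (psi_state alpha theta mu) (phi_state beta)).
Proof.
apply/matrixP => k l; rewrite /pinchmx [RHS]mxE !reduced_B_phi_state.
case: eqP => h.
  apply: eq_bigr => a _.
  by rewrite -(parity_partner_eq a h) psi_state_gram_diag.
apply: big1 => a _; rewrite phi_state_gram_offdiag ?mulr0 //.
by apply: parity_partner_neq; apply/eqP.
Qed.

End ReducedState.

Theorem lemma3 (R : realType) (x y z : R) :
  normalized x y z ->
  (exists alpha beta theta mu : R,
      [/\ 0 <= alpha <= pi / 2, 0 <= beta <= pi / 2,
          0 <= theta < 2 * pi, 0 < mu <= pi / 2 &
          KE_attained_at x y z (psi_state alpha theta mu) (phi_state beta)]) ->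
  exists alpha beta : R,
    [/\ 0 <= alpha <= pi / 2, 0 <= beta <= pi / 2 &
        KE_attained_at x y z (phi_state alpha) (phi_state beta)].
Proof.
move=> _ [alpha [beta [theta [mu [alpha_range beta_range _ _ psi_opt]]]]].
exists alpha, beta; split=> [//|//|m n psi phi psi_unit phi_unit].
apply: le_trans (psi_opt m n psi phi psi_unit phi_unit) _.
rewrite /Eout (reduced_B_phi_state_pinch x y z alpha theta mu beta).
exact: vN_entropy_pinchmx (reduced_B_hermitian _ _ _ _ _)
                          (reduced_B_psd _ _ _ _ _).
Qed.
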